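(* Let $(G,k)$ be an instance of Clique and let $(\mathcal{G},k',\ell)$ be the instance of Multistage Vertex Cover produced from $(G,k)$ by the construction described in the context. If $G$ contains a clique of size $k$, then $(\mathcal{G},k',\ell)$ is a yes-instance of Multistage Vertex Cover.
   Context: Multistage Vertex Cover: given a temporal graph $\mathcal{G}$, i.e. a sequence of layers (static graphs) $(G_1,\dots,G_\tau)$ on a common vertex set $V'$, and integers $k'\in\mathbb{N}$, $\ell\in\mathbb{N}_0$, decide whether there is $(S_1,\dots,S_\tau)$ with each $S_i\subseteq V'$ a vertex cover of $G_i$ of size at most $k'$ and $|S_i\triangle S_{i+1}|\le\ell$ for all $i<\tau$ ($\triangle$ = symmetric difference). Construction: let $G=(V,E)$ with $E=\{e_1,\dots,e_m\}$, $m=|E|$, and positive integer $k$. Let $K=\binom{k}{2}$, $k'=2K+k+1$, $\kappa=K+k+3$, $\tau=2m\kappa+1$, and $\ell=2$. The vertex set $V'$ contains $V\cup E$ (each edge of $G$ is also a vertex), the sets $U^t=\{u^t_1,\dots,u^t_K\}$ for $t\in\{1,\dots,\kappa+1\}$, the set $C=\{c_1,\dots,c_{\tau}\}$, and additional new leaf vertices introduced below. The layers $G_1,\dots,G_\tau$ have the following edges: (1) for every odd $i\in\{1,\dots,\tau\}$, in $G_i$ the vertex $c_i$ is the center of a star with $k'+1$ new leaf vertices; (2) for every $j\in\{0,\dots,\kappa\}$, in $G_{2mj+1}$ each vertex of $U^{j+1}$ is the center of a star with $k'+1$ new leaf vertices; (3) for every $j\in\{0,\dots,\kappa-1\}$ and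 $i\in\{1,\dots,2m+1\}$, in $G_{2mj+i}$ the vertex $u^{j+1}_x$ is adjacent to $u^{j+2}_x$ for every $x\in\{1,\dots,K\}$; (4) for every even $i\in\{1,\dots,\tau-1\}$, the edge $\{c_i,c_{i+1}\}$ is present in $G_i$ and in $G_{i+1}$; (5) for every $j\in\{0,\dots,\kappa-1\}$ and $i\in\{1,\dots,m\}$ with $e_i=\{v,w\}$, in $G_{2mj+2i}$ the vertex $c_{2mj+2i}$ is adjacent to the vertices $e_i$, $v$ and $w$. No other edges are present. The output is $(\mathcal{G}=(G_1,\dots,G_\tau),k',\ell)$. *)

From HB Require Import structures.
From mathcomp Require Import all_boot.
Set Implicit Arguments. Unset Strict Implicit. Unset Printing Implicit Defensive.

Definition is_vc (T : finType) (E : T -> T -> Prop) (S : {set T}) : Prop :=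
  forall a b, E a b -> a \in S \/ b \in S.

Definition symdiff (T : finType) (A B : {set T}) : {set T} :=
  (A :\: B) :|: (B :\: A).

(* (G_1,...,G_tau), k', l is a yes-instance; layers are indexed 1..tau,
   layer i has edge relation L i. *)
Definition mvc_yes (T : finType) (tau : nat) (L : nat -> T -> T -> Prop)
    (kp l : nat) : Prop :=
  exists S : nat -> {set T},
    (forall i, 1 <= i <= tau -> is_vc (L i) (S i) /\ #|S i| <= kp) /\
    (forall i, 1 <= i < tau -> #|symdiff (S i) (S i.+1)| <= l).

(* G has vertex set V and edges e_1,...,e_m, given by ends : 'I_m -> V * V
   (edge e_(i+1) = {(ends i).1, (ends i).2}). *)
Definition simple_edges (V : finType) (m : nat) (ends : 'I_m -> V * V) : Prop :=
  (forall i, (ends i).1 != (ends i).2) /\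
  (forall i j, ends i = ends j \/ ends i = ((ends j).2, (ends j).1) -> i = j).

Definition adj (V : finType) (m : nat) (ends : 'I_m -> V * V) (u v : V) : Prop :=
  exists i, ends i = (u, v) \/ ends i = (v, u).

Definition has_clique (V : finType) (m : nat) (ends : 'I_m -> V * V) (k : nat) : Prop :=
  exists Q : {set V}, #|Q| = k /\ {in Q &, forall u v, u != v -> adj ends u v}.

Section Construction.
Variables (V : finType) (m : nat) (ends : 'I_m -> V * V) (k : nat).

Definition Kc := 'C(k, 2).
Definition kp := 2 * Kc + k + 1.
Definition kappa := Kc + k + 3.
Definition tau := (2 * m * kappa).+1.
Definition ell := 2.

(* Vertex set V' :
   V  +  E (as 'I_m)  +  U^1..U^(kappa+1) (t : 'I_kappa.+1, x : 'I_Kc  ~ u^(t+1)_(x+1))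
   +  C (c : 'I_tau  ~ c_(c+1))
   +  leaves of the star at c_(2j+1), j : 'I_(m*kappa).+1
   +  leaves of the star at u^(j+1)_(x+1), j : 'I_kappa.+1, x : 'I_Kc *)
Definition vertT : finType :=
  (V + 'I_m + ('I_kappa.+1 * 'I_Kc) + 'I_tau
     + ('I_(m * kappa).+1 * 'I_kp.+1)
     + ('I_kappa.+1 * 'I_Kc * 'I_kp.+1))%type.

Definition vV (v : V) : vertT := inl (inl (inl (inl (inl v)))).
Definition vE (i : 'I_m) : vertT := inl (inl (inl (inl (inr i)))).
Definition vU (t : 'I_kappa.+1) (x : 'I_Kc) : vertT := inl (inl (inl (inr (t, x)))).
Definition vC (c : 'I_tau) : vertT := inl (inl (inr c)).
Definition vLC (j : 'I_(m * kappa).+1) (y : 'I_kp.+1) : vertT := inl (inr (j, y)).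
Definition vLU (j : 'I_kappa.+1) (x : 'I_Kc) (y : 'I_kp.+1) : vertT := inr (j, x, y).

(* c_n for 1 <= n <= tau *)
Definition cv (n : nat) : vertT := vC (inord n.-1).

(* directed version of the edges of layer G_i (i is 1-based) *)
Definition base_edge (i : nat) (a b : vertT) : Prop :=
  (* (1) star at c_i, i odd *)
  (exists (j : 'I_(m * kappa).+1) (y : 'I_kp.+1),
      i = 2 * j + 1 /\ a = cv i /\ b = vLC j y) \/
  (* (2) in G_(2mj+1) each vertex of U^(j+1) is the center of a star *)
  (exists (j : 'I_kappa.+1) (x : 'I_Kc) (y : 'I_kp.+1),
      i = 2 * m * j + 1 /\ a = vU j x /\ b = vLU j x y) \/
  (* (3) u^(j+1)_x -- u^(j+2)_x in G_(2mj+ii), 1 <= ii <= 2m+1, j < kappa *)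
  (exists (j : 'I_kappa.+1) (x : 'I_Kc) (ii : nat),
      j < kappa /\ 1 <= ii <= 2 * m + 1 /\ i = 2 * m * j + ii /\
      a = vU j x /\ b = vU (inord j.+1) x) \/
  (* (4) edge c_ii -- c_(ii+1) in G_ii and G_(ii+1), ii even, ii <= tau - 1 *)
  (exists ii : nat,
      ~~ odd ii /\ 1 <= ii <= tau - 1 /\ (i = ii \/ i = ii.+1) /\
      a = cv ii /\ b = cv ii.+1) \/
  (* (5) in G_(2mj+2(ii+1)), c_(2mj+2(ii+1)) adjacent to e_(ii+1) and its endpoints *)
  (exists (j : nat) (ii : 'I_m),
      j < kappa /\ i = 2 * m * j + 2 * ii.+1 /\ a = cv i /\
      (b = vE ii \/ b = vV (ends ii).1 \/ b = vV (ends ii).2)).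

Definition layer_edge (i : nat) (a b : vertT) : Prop :=
  base_edge i a b \/ base_edge i b a.

End Construction.

From mathcomp Require Import all_boot zify.
Set Implicit Arguments. Unset Strict Implicit. Unset Printing Implicit Defensive.

(* Fix a clique Q of size k and a set J of K edges of G inside Q.  Every
   S_i contains Q, J, one vertex of C and one copy u^t_x of each x <= K.
   In the j-th block of 2m layers the C-vertex walks along c_1 c_2 ... and
   each U-vertex sits in U^(j+1) or U^(j+2).  When the walk reaches the even
   layer of a chosen edge e, the edges c -- e, v, w of that layer are
   already covered by Q and J, so the C-vertex may step ahead one layer
   early; the next change then keeps the C-vertex and instead moves one
   u_x from U^(j+1) to U^(j+2).  Since |J| = K, all of U^(j+1) has moved
   on at the end of the block, ready for the next one. *)

Lemma card_symdiff_setUl (T : finType) (X A B : {set T}) :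
  #|symdiff (X :|: A) (X :|: B)| <= #|symdiff A B|.
Proof.
apply/subset_leq_card/subsetP => z; rewrite !inE.
by case: (z \in X); case: (z \in A); case: (z \in B).
Qed.

Lemma card_symdiff_set1 (T : finType) (a b : T) : #|symdiff [set a] [set b]| <= 2.
Proof.
apply: (@leq_trans #|[set a; b]|); last by rewrite cards2; case: (_ != _).
by apply/subset_leq_card/subsetP => z; rewrite !inE; case: (z == a); case: (z == b).
Qed.

Lemma card_symdiff_imset (I T : finType) (F G : I -> T) (A : {pred I}) :
  #|symdiff (F @: A) (G @: A)| <= #|[set x in A | F x != G x]|.*2.
Proof.
set D := [set x in A | F x != G x].
apply: (@leq_trans #|F @: D :|: G @: D|); last first.
  apply: leq_trans (leq_card_setU _ _) _.
  by rewrite -addnn leq_add ?leq_imset_card.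
apply/subset_leq_card/subsetP => z.
rewrite !inE => /orP[] /andP[zNim /imsetP[x xA zE]]; subst z.
- apply/orP; left; apply: imset_f; rewrite inE xA /=.
  by apply: contraNneq zNim => ->; apply: imset_f.
- apply/orP; right; apply: imset_f; rewrite inE xA /=.
  by apply: contraNneq zNim => <-; apply: imset_f.
Qed.

Lemma exists_subset_card (T : finType) (A : {set T}) n : n <= #|A| ->
  exists2 B : {set T}, B \subset A & #|B| = n.
Proof.
elim: n => [|n IH] leA; first by exists set0; rewrite ?sub0set ?cards0.
have [B BA cardB] := IH (ltnW leA).
have /properP[_ [x xA xNB]] : B \proper A by rewrite properEcard BA cardB.
exists (x |: B); first by rewrite subUset sub1set xA.
by rewrite cardsU1 xNB cardB.
Qed.

Lemma card_clique_edges (V : finType) (m : nat) (ends : 'I_m -> V * V) (Q : {set V}) :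
  {in Q &, forall u v, u != v -> adj ends u v} ->
  'C(#|Q|, 2) <= #|[set i | ((ends i).1 \in Q) && ((ends i).2 \in Q)]|.
Proof.
move=> Qclique; set CI := [set i | _].
pose pair i := [set (ends i).1; (ends i).2].
rewrite -cards_draws; apply: leq_trans (leq_imset_card pair CI).
apply/subset_leq_card/subsetP => A; rewrite inE => /andP[AQ /cards2P[u [v [uv defA]]]].
have uQ : u \in Q by apply: (subsetP AQ); rewrite defA !inE eqxx.
have vQ : v \in Q by apply: (subsetP AQ); rewrite defA !inE eqxx orbT.
have [i ends_i] := Qclique u v uQ vQ uv.
apply/imsetP; exists i; first by rewrite inE; case: ends_i => -> /=; rewrite uQ vQ.
by rewrite /pair defA; case: ends_i => -> //=; rewrite setUC.
Qed.

Section Schedule.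
Variables (V : finType) (m : nat) (ends : 'I_m -> V * V) (k : nat).
Variables (Q : {set V}) (J : {set 'I_m}).
Hypothesis J_card : #|J| = Kc k.
Hypothesis J_clique : forall i, i \in J -> ((ends i).1 \in Q) && ((ends i).2 \in Q).

Local Notation T := (vertT V m k).
Local Notation M := (2 * m).

Definition chosen (t : nat) : bool := t \in [seq val i | i <- enum J].

Definition nchosen (t : nat) : nat := count chosen (iota 0 t).

(* With the 0-based indices of [vU], the first a copies lie in U^(j+2) and
   the others in U^(j+1). *)
Definition Ulevel (j a : nat) : {set T} :=
  [set vU V m (inord (j + (x < a))) x | x : 'I_(Kc k)].

Definition Upart (q : nat) : {set T} := Ulevel (q %/ M) (nchosen (q %% M)./2).

Definition pause (q : nat) : bool := odd q && chosen (q %% M)./2.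

Definition clique_part : {set T} := vV m k @: Q :|: vE V k @: J.

(* [cover q] is S_(q+1); its layer is the (p+1)-th of block j, where
   q = j * 2m + p with p < 2m. *)
Definition cover (q : nat) : {set T} :=
  clique_part :|: [set cv V m k (q.+1 + pause q)] :|: Upart q.

Lemma chosen_val (i : 'I_m) : chosen i = (i \in J).
Proof. by rewrite /chosen mem_map ?mem_enum //; apply: val_inj. Qed.

Lemma nchosenS t : nchosen t.+1 = nchosen t + chosen t.
Proof. by rewrite /nchosen -addn1 iotaD count_cat /= addn0. Qed.

Lemma nchosen_m : nchosen m = Kc k.
Proof.
rewrite /nchosen -J_card cardE /enum_mem size_filter -enumT -val_enum_ord count_map.
by apply: eq_count => i; rewrite /= chosen_val.
Qed.

Lemma m_gt0 : 0 < Kc k -> 0 < m.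
Proof. by rewrite -J_card => /card_gt0P[[i lt_im] _]; apply: leq_ltn_trans lt_im. Qed.

Lemma Ulevel_full j : Ulevel j (Kc k) = Ulevel j.+1 0.
Proof. by apply: eq_imset => x; rewrite ltn_ord ltn0 addn0 addn1. Qed.

Lemma card_Ulevel_step j a : #|symdiff (Ulevel j a) (Ulevel j a.+1)| <= 2.
Proof.
apply: leq_trans (card_symdiff_imset _ _ _) _.
have moved (z : 'I_(Kc k)) :
    vU V m (inord (j + (z < a))) z != vU V m (inord (j + (z < a.+1))) z -> z = a :> nat.
  case: (eqVneq (z : nat) a) => // zNa.
  by rewrite [z < a.+1]ltnS [z <= a]leq_eqVlt (negbTE zNa) eqxx.
rewrite -[2]/(1.*2) leq_double; apply/card_le1_eqP => x y; rewrite !inE.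
by move=> /moved xa /moved ya; apply: ord_inj; rewrite xa ya.
Qed.

Lemma Upart_blockE j p : 0 < m -> p <= M -> Upart (j * M + p) = Ulevel j (nchosen p./2).
Proof.
move=> m_pos; have M_pos : 0 < M by rewrite muln_gt0.
rewrite leq_eqVlt => /orP[/eqP-> | lt_pM].
  rewrite /Upart divnMDl // modnMDl divnn modnn M_pos addn1 mul2n doubleK nchosen_m.
  by rewrite Ulevel_full.
by rewrite /Upart divnMDl // modnMDl divn_small // modn_small // addn0.
Qed.

Lemma pause_blockE j p : p < M -> pause (j * M + p) = odd p && chosen p./2.
Proof. by move=> lt_pM; rewrite /pause modnMDl modn_small // oddD !oddM /= andbF. Qed.

Lemma nchosen_half_succ p : nchosen (p.+1)./2 = nchosen p./2 + (odd p && chosen p./2).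
Proof. by rewrite /= uphalf_half; case: (odd p); rewrite /= ?nchosenS ?addn0. Qed.

Lemma card_cover q : #|Q| <= k -> #|cover q| <= kp k.
Proof.
move=> Q_card.
have card_clique_part : #|clique_part| <= k + Kc k.
  apply: leq_trans (leq_card_setU _ _) _.
  by apply: leq_add; apply: leq_trans (leq_imset_card _ _) _; rewrite ?J_card.
have card_Upart : #|Upart q| <= Kc k.
  by apply: leq_trans (leq_imset_card _ _) _; rewrite card_ord.
apply: leq_trans (leq_card_setU _ _) _.
apply: leq_trans (leq_add (leq_card_setU _ _) card_Upart) _.
by rewrite cards1 /kp; lia.
Qed.

Lemma mem_cover_clique_part q z : z \in clique_part -> z \in cover q.
Proof. by rewrite /cover !inE => ->. Qed.

Lemma mem_cover_cv q : cv V m k (q.+1 + pause q) \in cover q.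
Proof. by rewrite /cover !inE eqxx orbT. Qed.

Lemma mem_cover_cv_even q : ~~ odd q -> cv V m k q.+1 \in cover q.
Proof. by move=> even_q; have := mem_cover_cv q; rewrite /pause (negbTE even_q) addn0. Qed.

Lemma mem_cover_Ulevel j p (x : 'I_(Kc k)) : 0 < m -> p <= M ->
  vU V m (inord (j + (x < nchosen p./2))) x \in cover (j * M + p).
Proof.
move=> m_pos le_pM; rewrite /cover Upart_blockE // inE; apply/orP; right.
exact: imset_f.
Qed.

Lemma cover_base_edge q a b : base_edge ends q.+1 a b -> a \in cover q \/ b \in cover q.
Proof.
case=> [[j [y [def_q [-> ->]]]] | [[j [x [y [def_q [-> ->]]]]] |
       [[j [x [ii [_ [/andP[ii_gt0 ii_le] [def_q [-> ->]]]]]]] |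
       [[ii [even_ii [_ [def_q [-> ->]]]]] | [j [ii [_ [def_q [-> b_end]]]]]]]]].
- left; have -> : q = 2 * j by lia.
  by apply: mem_cover_cv_even; rewrite oddM.
- left; have m_pos : 0 < m by apply: m_gt0; apply: leq_ltn_trans (ltn_ord x).
  have -> : q = j * M + 0 by lia.
  have := @mem_cover_Ulevel j 0 x m_pos (leq0n M).
  by have -> : nchosen 0./2 = 0 by []; rewrite ltn0 /= !addn0 inord_val.
- have m_pos : 0 < m by apply: m_gt0; apply: leq_ltn_trans (ltn_ord x).
  have -> : q = j * M + ii.-1 by lia.
  have := @mem_cover_Ulevel j ii.-1 x m_pos (_ : ii.-1 <= M); case: (x < _) => /=.
  + by rewrite addn1 => U_mem; right; apply: U_mem; lia.
  + by rewrite addn0 inord_val => U_mem; left; apply: U_mem; lia.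
- case: def_q => [def_ii | [->]]; last by right; apply: mem_cover_cv_even.
  rewrite -def_ii; have := mem_cover_cv q.
  by case: (pause q); rewrite ?addn0 ?addn1 => c_mem; [right | left].
- have lt_iim := ltn_ord ii.
  have -> : q = j * M + ii.*2.+1 by lia.
  have := mem_cover_cv (j * M + ii.*2.+1).
  rewrite pause_blockE; last by lia.
  rewrite /= odd_double uphalf_double chosen_val /=.
  case: (boolP (ii \in J)) => [iiJ _ | iiNJ]; last by rewrite addn0; left.
  right; apply: mem_cover_clique_part; have /andP[end1_Q end2_Q] := J_clique iiJ.
  by case: b_end => [-> | [-> | ->]]; rewrite inE imset_f ?orbT.
Qed.

Lemma card_symdiff_cover_succ q :
  q < M * kappa k -> #|symdiff (cover q) (cover q.+1)| <= 2.
Proof.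
move=> lt_q; have m_pos : 0 < m.
  by rewrite lt0n; apply: contraTneq lt_q => ->; rewrite muln0 mul0n.
have M_pos : 0 < M by rewrite muln_gt0.
set j := q %/ M; set p := q %% M.
have def_q : q = j * M + p := divn_eq q M.
have lt_pM : p < M := ltn_pmod q M_pos.
have U_q : Upart q = Ulevel j (nchosen p./2) by rewrite def_q Upart_blockE // ltnW.
have U_q1 : Upart q.+1 = Ulevel j (nchosen p./2 + pause q).
  by rewrite def_q -addnS Upart_blockE // nchosen_half_succ pause_blockE.
rewrite /cover U_q U_q1; case: (boolP (pause q)) => [paused | running] /=.
  have -> : pause q.+1 = false by move: paused; rewrite /pause /= => /andP[-> _].
  rewrite !addn1 addn0.
  exact: leq_trans (card_symdiff_setUl _ _ _) (card_Ulevel_step _ _).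
rewrite !addn0 setUAC [X in symdiff _ X]setUAC.
exact: leq_trans (card_symdiff_setUl _ _ _) (card_symdiff_set1 _ _).
Qed.

End Schedule.

Theorem lemma18 (V : finType) (m : nat) (ends : 'I_m -> V * V) (k : nat) :
  simple_edges ends -> 0 < k ->
  has_clique ends k ->
  mvc_yes (tau m k) (@layer_edge V m ends k) (kp k) ell.
Proof.
move=> _ _ [Q [Q_card Q_clique]].
pose clique_edges := [set i | ((ends i).1 \in Q) && ((ends i).2 \in Q)].
have [J J_sub J_card] : exists2 J : {set 'I_m}, J \subset clique_edges & #|J| = Kc k.
  by apply: exists_subset_card; rewrite /Kc -Q_card card_clique_edges.
have J_clique i : i \in J -> ((ends i).1 \in Q) && ((ends i).2 \in Q).
  by move/(subsetP J_sub); rewrite inE.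
exists (fun i => cover k Q J i.-1); split.
- case=> [|q] //= _; split; last by rewrite card_cover ?Q_card.
  move=> a b [ab | ba]; first exact: cover_base_edge ab.
  by apply/or_comm; apply: cover_base_edge ba.
- case=> [|q] // /andP[_ lt_q]; apply: (card_symdiff_cover_succ _ J_card).
  by rewrite /tau in lt_q; lia.
Qed.
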